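(* Let $(X,d)$ be a metric space admitting a weak conical bicombing, and let $T:X\rightarrow X$ be an isometric embedding (i.e. $d(Tx,Ty)=d(x,y)$ for all $x,y\in X$). Put $d_T=\inf_{x\in X}d(x,Tx)$. Then there is a metric functional $h\in\overline{X}$ such that \[ h(Tx)=h(x)-d_T\quad\text{for all }x\in X. \] If $h=h_{y}$ for some point $y\in X$, then $Ty=y$. If $T$ is an isometry (a surjective isometric embedding), then $Th=h$.
   Context: Let $(X,d)$ be a metric space and fix a base point $x_0\in X$. Let $\mathrm{Hom}(X,\mathbb{R})$ be the set of $1$-Lipschitz functions $X\to\mathbb{R}$ with the topology of pointwise convergence. For $x\in X$ set $h_x(\cdot)=d(\cdot,x)-d(x_0,x)$. The metric compactification $\overline{X}$ is the closure of $\{h_x:x\in X\}$ in $\mathrm{Hom}(X,\mathbb{R})$ (it is compact); its elements are called metric functionals. A surjective isometry $T$ of $X$ acts on $\overline{X}$ by $(Th)(x)=h(T^{-1}x)-h(T^{-1}x_0)$. A weak conical bicombing on $X$ is a map $\sigma:X\times X\times[0,1]\to X$, $(x,y,t)\mapsto\sigma_{xy}(t)$, such that for all $x,y$ the path $\sigma_{xy}$ is a constant speed geodesic from $x$ to $y$ (i.e. $\sigma_{xy}(0)=x$, $\sigma_{xy}(1)=y$, $d(\sigma_{xy}(s),\sigma_{xy}(t))=|s-t|\,d(x,y)$), and $d(\sigma_{xy}(t),\sigma_{xy'}(t))\le t\,d(y,y')$ for all $x,y,y'\in X$ and $t\in[0,1]$. *)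

From Stdlib Require Import Reals List.
Open Scope R_scope.

Definition is_metric {X : Type} (d : X -> X -> R) : Prop :=
  (forall x y, d x y = 0 <-> x = y) /\
  (forall x y, d x y = d y x) /\
  (forall x y z, d x z <= d x y + d y z).

Definition weak_conical_bicombing {X : Type} (d : X -> X -> R)
  (sigma : X -> X -> R -> X) : Prop :=
  (forall x y, sigma x y 0 = x /\ sigma x y 1 = y) /\
  (forall x y s t, 0 <= s <= 1 -> 0 <= t <= 1 ->
     d (sigma x y s) (sigma x y t) = Rabs (s - t) * d x y) /\
  (forall x y y' t, 0 <= t <= 1 ->
     d (sigma x y t) (sigma x y' t) <= t * d y y').

Definition lipschitz1 {X : Type} (d : X -> X -> R) (h : X -> R) : Prop :=
  forall x y, Rabs (h x - h y) <= d x y.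

Definition hfun {X : Type} (d : X -> X -> R) (x0 x : X) : X -> R :=
  fun z => d z x - d x0 x.

(* h belongs to the closure of {h_x : x in X} in Hom(X,R) with the topology of
   pointwise convergence (basic neighbourhoods: finitely many points, radius eps). *)
Definition metric_functional {X : Type} (d : X -> X -> R) (x0 : X) (h : X -> R)
  : Prop :=
  lipschitz1 d h /\
  forall (F : list X) (eps : R), 0 < eps ->
    exists x : X, forall z, In z F -> Rabs (h z - hfun d x0 x z) < eps.

Definition is_inf_displacement {X : Type} (d : X -> X -> R) (T : X -> X) (dT : R)
  : Prop :=
  (forall x, dT <= d x (T x)) /\
  (forall e, 0 < e -> exists x, d x (T x) < dT + e).

From Stdlib Require Import Reals List Lra IndefiniteDescription.
From mathcomp Require all_boot all_algebra all_classical all_reals topology normedtype Rstruct Rstruct_topology.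
Open Scope R_scope.

(* For t < 1 the map S_t y := sigma(x0, T y, t) is a t-contraction, so it has
   approximate fixed points y.  For such y the conical inequality gives
   d(Tx,y) - d(x,y) <= (1-t)(d(x0,Tx) - d(x,y)) + eps and
   (1-t) d(x0,y) >= t d(y,Ty) - eps, while comparing with a point of almost
   minimal displacement gives d(y,Ty) <= d_T + O(eps) once (1-t) is small.
   Hence h_y(Tx) - h_y(x) is within O(eps) of -d_T, uniformly on bounded sets.
   Since |h_y(z)| <= d(z,x0), Tychonoff's theorem yields a pointwise cluster
   point h of these h_y, and h (T x) = h x - d_T passes to the limit; the two
   remaining claims are consequences of this identity. *)

Definition cluster_point {X : Type} (f : nat -> X -> R) (h : X -> R) : Prop :=
  forall (F : list X) (eps : R) (N : nat), 0 < eps ->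
    exists n, (N <= n)%nat /\ forall z, In z F -> Rabs (h z - f n z) < eps.

Module PointwiseCompactness.
Import all_boot all_algebra all_classical all_reals topology normedtype Rstruct Rstruct_topology.
Import Num.Theory.
Local Open Scope classical_set_scope.
Local Open Scope ring_scope.

Lemma bounded_seq_cluster_point {X : Type} (b : X -> R) (f : nat -> X -> R) :
  (forall n z, Rle (Rabs (f n z)) (b z)) -> exists h, cluster_point f h.
Proof.
move=> fb.
pose A : set (prod_topology (fun _ : {classic X} => R)) :=
  [set g | forall z, `[- b z, b z]%classic (g z)].
have cA : compact A.
  exact: (@tychonoff {classic X} (fun _ => R) (fun z => `[- b z, b z]%classic)
    (fun z => @segment_compact R (- b z) (b z))).
pose tail N : set (prod_topology (fun _ : {classic X} => R)) :=
  [set g | exists2 n, (N <= n)%N & g = f n].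
pose G := filter_from setT tail.
have GF : ProperFilter G.
  apply: filter_from_proper; last by move=> N _; exists (f N); exists N.
  apply: filter_fromT_filter; first by exists 0%N.
  move=> i j; exists (maxn i j) => g [n]; rewrite geq_max => /andP[iN jN] ->.
  by split; exists n.
have GA : G A.
  exists 0%N => // g [n _ ->] z /=; rewrite in_itv /=.
  by rewrite -ler_norml -RabsE; apply/RleP.
have [h [_ hcl]] := cA G GF GA.
exists h => F eps N /RltP eps_gt0.
pose V : set (prod_topology (fun _ : {classic X} => R)) :=
  [set g | forall z, In z F -> Rlt (Rabs (Rminus (h z) (g z))) eps].
have nV : nbhs h V.
  elim: F @V => [|z F IH]; first by apply: filterS filterT => g _ z [].
  have Hz : nbhs h (proj (z : {classic X}) @^-1` ball (h z) eps).
    exact/proj_continuous/nbhsx_ballx.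
  apply: filterS (filterI Hz IH) => g [gz gF] w [<-|Fw]; last exact: gF.
  by apply/RltP.
have [g [[n Nn ->] Vn]] := hcl (tail N) V (ex_intro2 _ _ N I (fun _ x => x)) nV.
by exists n; split=> //; apply/ssrnat.leP.
Qed.

End PointwiseCompactness.

Lemma Rabs_le_inv (a b : R) : Rabs a <= b -> - b <= a <= b.
Proof.
  intros H. pose proof (Rle_abs a). pose proof (Rle_abs (- a)).
  rewrite Rabs_Ropp in *. lra.
Qed.

Lemma Rabs_le_eps_eq0 (a : R) : (forall eps, 0 < eps -> Rabs a <= eps) -> a = 0.
Proof.
  intros H. destruct (Req_dec a 0) as [|Ha]; [assumption|].
  pose proof (Rabs_pos_lt a Ha). specialize (H (Rabs a / 2)). lra.
Qed.

Lemma cluster_point_translation {X : Type} (f : nat -> X -> R) (h : X -> R)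
    (T : X -> X) (K : X -> R) (c : R) :
  cluster_point f h ->
  (forall n x, Rabs (f n (T x) - f n x + c) <= / (INR n + 1) * K x) ->
  forall x, h (T x) = h x - c.
Proof.
  intros Hh Hf x.
  assert (HK : 0 <= K x).
  { specialize (Hf 0%nat x). pose proof (Rabs_pos (f 0%nat (T x) - f 0%nat x + c)).
    simpl in Hf. rewrite Rplus_0_l, Rinv_1 in Hf. lra. }
  enough (h (T x) - h x + c = 0) by lra.
  apply Rabs_le_eps_eq0. intros eps Heps.
  set (eta := eps / (2 * (K x + 1))).
  assert (Heta : 0 < eta) by (apply Rdiv_lt_0_compat; lra).
  destruct (archimed_cor1 eta Heta) as [N [HN HN0]].
  destruct (Hh (T x :: x :: nil) (eps / 4) N ltac:(lra)) as [n [Hn Hhn]].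
  pose proof (Rabs_def2 _ _ (Hhn (T x) (or_introl eq_refl))) as H1.
  pose proof (Rabs_def2 _ _ (Hhn x (or_intror (or_introl eq_refl)))) as H2.
  pose proof (Rabs_le_inv _ _ (Hf n x)) as H3.
  assert (Hn1 : / (INR n + 1) <= eta).
  { apply Rlt_le, Rle_lt_trans with (/ INR N); [|assumption].
    apply Rinv_le_contravar; [now apply lt_0_INR|].
    apply le_INR in Hn. lra. }
  assert (HKn : / (INR n + 1) * K x <= eps / 2).
  { apply Rle_trans with (eta * (K x + 1)).
    - pose proof (Rinv_0_lt_compat (INR n + 1) ltac:(pose proof (pos_INR n); lra)). nra.
    - unfold eta. apply Req_le. field. lra. }
  apply Rabs_le. lra.
Qed.

Section Metric.

Context {X : Type} {d : X -> X -> R}.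
Hypothesis Hd : is_metric d.

Lemma dist_eq0 x y : d x y = 0 -> x = y.
Proof. apply Hd. Qed.

Lemma dist_refl x : d x x = 0.
Proof. now apply Hd. Qed.

Lemma dist_sym x y : d x y = d y x.
Proof. apply Hd. Qed.

Lemma dist_triangle x y z : d x z <= d x y + d y z.
Proof. apply Hd. Qed.

Lemma dist_nonneg x y : 0 <= d x y.
Proof.
  pose proof (dist_triangle x y x). rewrite dist_refl, (dist_sym y x) in H. lra.
Qed.

Lemma hfun_lipschitz1 x0 y : lipschitz1 d (hfun d x0 y).
Proof.
  intros a b. unfold hfun. apply Rabs_le.
  pose proof (dist_triangle a b y). pose proof (dist_triangle b a y).
  rewrite (dist_sym b a) in *. lra.
Qed.

Lemma Rabs_hfun_le x0 y z : Rabs (hfun d x0 y z) <= d z x0.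
Proof.
  pose proof (hfun_lipschitz1 x0 y z x0) as H. unfold hfun in *.
  now replace (d z y - d x0 y) with (d z y - d x0 y - (d x0 y - d x0 y)) by ring.
Qed.

Lemma lipschitz1_cluster_point (f : nat -> X -> R) (h : X -> R) :
  (forall n, lipschitz1 d (f n)) -> cluster_point f h -> lipschitz1 d h.
Proof.
  intros Hf Hh x y.
  assert (Happrox : forall eps, 0 < eps -> Rabs (h x - h y) <= d x y + eps).
  { intros eps Heps.
    destruct (Hh (x :: y :: nil) (eps / 2) 0%nat ltac:(lra)) as [n [_ Hn]].
    pose proof (Rabs_def2 _ _ (Hn x (or_introl eq_refl))).
    pose proof (Rabs_def2 _ _ (Hn y (or_intror (or_introl eq_refl)))).
    pose proof (Rabs_le_inv _ _ (Hf n x y)).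
    apply Rabs_le. lra. }
  now apply Rle_plus_epsilon.
Qed.

Lemma metric_functional_cluster_point (x0 : X) (y : nat -> X) (h : X -> R) :
  cluster_point (fun n => hfun d x0 (y n)) h -> metric_functional d x0 h.
Proof.
  intros Hh. split.
  - apply (lipschitz1_cluster_point _ _ (fun n => hfun_lipschitz1 x0 (y n)) Hh).
  - intros F eps Heps. destruct (Hh F eps 0%nat Heps) as [n [_ Hn]].
    now exists (y n).
Qed.

Lemma metric_functional_base (x0 : X) (h : X -> R) :
  metric_functional d x0 h -> h x0 = 0.
Proof.
  intros [_ Happrox]. apply Rabs_le_eps_eq0. intros eps Heps.
  destruct (Happrox (x0 :: nil) eps Heps) as [x Hx].
  specialize (Hx x0 (or_introl eq_refl)). unfold hfun in Hx.
  rewrite Rminus_diag, Rminus_0_r in Hx. lra.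
Qed.

Lemma contraction_approx_fixpoint (f : X -> X) (t : R) :
  0 <= t < 1 -> (forall a b, d (f a) (f b) <= t * d a b) ->
  forall (x : X) (delta : R), 0 < delta -> exists y, d y (f y) <= delta.
Proof.
  intros Ht Hf x delta Hdelta.
  set (C := d x (f x)).
  assert (Hiter : forall k, d (Nat.iter k f x) (f (Nat.iter k f x)) <= t ^ k * C).
  { induction k as [|k IH]; simpl.
    - unfold C. lra.
    - eapply Rle_trans; [apply Hf|]. rewrite Rmult_assoc.
      apply Rmult_le_compat_l; lra. }
  assert (HC : 0 <= C) by apply dist_nonneg.
  destruct (pow_lt_1_zero t ltac:(rewrite Rabs_right; lra) (delta / (C + 1)))
    as [N HN]; [apply Rdiv_lt_0_compat; lra|].
  specialize (HN N (le_n N)).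
  rewrite Rabs_right in HN by (apply Rle_ge, pow_le; lra).
  exists (Nat.iter N f x). eapply Rle_trans; [apply Hiter|].
  apply Rle_trans with (t ^ N * (C + 1)).
  - apply Rmult_le_compat_l; [apply pow_le|]; lra.
  - apply Rlt_le. apply Rmult_lt_compat_r with (r := C + 1) in HN; [|lra].
    unfold Rdiv in HN. now rewrite Rmult_assoc, Rinv_l, Rmult_1_r in HN by lra.
Qed.

Context {T : X -> X}.
Hypothesis HT : forall x y, d (T x) (T y) = d x y.

Lemma dist_image_ge x y : d x y - d y (T y) <= d (T x) y.
Proof.
  pose proof (dist_triangle (T x) y (T y)). rewrite HT in H. lra.
Qed.

Lemma inf_displacement_nonneg dT : is_inf_displacement d T dT -> 0 <= dT.
Proof.
  intros [_ Hinf]. destruct (Rle_dec 0 dT) as [|Hneg]; [assumption|].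
  destruct (Hinf (- dT)) as [x Hx]; [lra|].
  pose proof (dist_nonneg x (T x)). lra.
Qed.

End Metric.

Section ConicalContraction.

Context {X : Type} {d : X -> X -> R} {sigma : X -> X -> R -> X} {T : X -> X} (x0 : X).
Hypothesis Hd : is_metric d.
Hypothesis Hsigma : weak_conical_bicombing d sigma.
Hypothesis HT : forall x y, d (T x) (T y) = d x y.

Let S (t : R) (y : X) : X := sigma x0 (T y) t.

Lemma cone_lipschitz t a b : 0 <= t <= 1 -> d (S t a) (S t b) <= t * d a b.
Proof.
  intros Ht. unfold S. rewrite <- (HT a b). now apply Hsigma.
Qed.

Lemma dist_cone_image t a : 0 <= t <= 1 -> d (S t a) (T a) = (1 - t) * d x0 (T a).
Proof.
  intros Ht. destruct Hsigma as [Hends [Hgeo _]]. unfold S.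
  pose proof (Hgeo x0 (T a) t 1 Ht ltac:(lra)) as H.
  rewrite (proj2 (Hends x0 (T a))) in H. rewrite H, Rabs_left1 by lra. ring.
Qed.

Lemma dist_base_cone t a : 0 <= t <= 1 -> d x0 (S t a) = t * d x0 (T a).
Proof.
  intros Ht. destruct Hsigma as [Hends [Hgeo _]]. unfold S.
  pose proof (Hgeo x0 (T a) 0 t ltac:(lra) Ht) as H.
  rewrite (proj1 (Hends x0 (T a))) in H. rewrite H, Rabs_left1 by lra. ring.
Qed.

Section ApproximateFixpoint.

Variables (t eps : R) (y : X).
Hypothesis Ht : 0 <= t <= 1.
Hypothesis Hy : d y (S t y) <= eps.

Lemma displacement_le_base : d y (T y) <= eps + (1 - t) * d x0 (T y).
Proof.
  pose proof (dist_triangle Hd y (S t y) (T y)). rewrite dist_cone_image in H; lra.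
Qed.

Lemma displacement_le xs :
  d y (T y) <= d xs (T xs) + 2 * (1 - t) * d x0 (T xs) + 2 * eps.
Proof.
  assert (Hxs : (1 - t) * d xs y <= d xs (T xs) + (1 - t) * d x0 (T xs) + eps).
  { pose proof (dist_triangle Hd xs (T xs) y).
    pose proof (dist_triangle Hd (T xs) (S t xs) y).
    pose proof (dist_triangle Hd (S t xs) (S t y) y).
    pose proof (cone_lipschitz t xs y Ht). pose proof (dist_cone_image t xs Ht).
    rewrite (dist_sym Hd (T xs) (S t xs)), (dist_sym Hd (S t y) y) in *. lra. }
  assert (Hm : (1 - t) * d x0 (T y) <= (1 - t) * (d x0 (T xs) + d xs y)).
  { apply Rmult_le_compat_l; [lra|].
    rewrite <- (HT xs y). apply dist_triangle, Hd. }
  pose proof displacement_le_base. lra.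
Qed.

Lemma dist_base_ge : t * d y (T y) - eps <= (1 - t) * d x0 y.
Proof.
  set (m := d x0 (T y)).
  assert (Hy0 : t * m - eps <= d x0 y).
  { pose proof (dist_triangle Hd x0 y (S t y)). rewrite dist_base_cone in H by lra.
    fold m in H. lra. }
  assert (H1 : (1 - t) * (t * m - eps) <= (1 - t) * d x0 y)
    by (apply Rmult_le_compat_l; lra).
  assert (H2 : t * d y (T y) <= t * (eps + (1 - t) * m))
    by (apply Rmult_le_compat_l; [lra|apply displacement_le_base]).
  nra.
Qed.

Lemma dist_image_le x : d (T x) y - d x y <= (1 - t) * (d x0 (T x) - d x y) + eps.
Proof.
  pose proof (dist_triangle Hd (T x) (S t x) y).
  pose proof (dist_triangle Hd (S t x) (S t y) y).
  pose proof (cone_lipschitz t x y Ht). pose proof (dist_cone_image t x Ht).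
  rewrite (dist_sym Hd (T x) (S t x)), (dist_sym Hd (S t y) y) in *. lra.
Qed.

End ApproximateFixpoint.

Lemma hfun_almost_translated dT eps :
  is_inf_displacement d T dT -> 0 < eps <= 1 ->
  exists y, forall x,
    Rabs (hfun d x0 y (T x) - hfun d x0 y x + dT) <= eps * (4 + dT + d x0 (T x) + d x0 x).
Proof.
  intros HdT Heps.
  pose proof (inf_displacement_nonneg Hd _ HdT) as HdT0.
  destruct HdT as [HdT_le HdT_approx].
  destruct (HdT_approx eps ltac:(lra)) as [xs Hxs].
  set (M := d x0 (T xs)).
  assert (HM : 0 <= M) by apply (dist_nonneg Hd).
  (* t := 1 - q must satisfy both 1 - t <= eps and 2 (1 - t) d(x0, T xs) <= eps. *)
  set (q := eps / (2 * (M + 1))).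
  assert (Hq : 0 < q <= eps / 2).
  { unfold q. split; [apply Rdiv_lt_0_compat; lra|].
    apply Rmult_le_compat_l; [lra|]. apply Rinv_le_contravar; lra. }
  assert (HqM : 2 * q * M <= eps).
  { unfold q. apply Rle_trans with (eps * (M / (M + 1))).
    - apply Req_le. field. lra.
    - rewrite <- (Rmult_1_r eps) at 2. apply Rmult_le_compat_l; [lra|].
      apply Rmult_le_reg_r with (M + 1); [lra|].
      unfold Rdiv. rewrite Rmult_assoc, Rinv_l; lra. }
  destruct (contraction_approx_fixpoint Hd (S (1 - q)) (1 - q) ltac:(lra)
              (fun a b => cone_lipschitz (1 - q) a b ltac:(lra)) x0 eps ltac:(lra))
    as [y Hy].
  exists y. intros x. unfold hfun.
  pose proof (displacement_le (1 - q) eps y ltac:(lra) Hy xs) as Hdisp.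
  pose proof (dist_base_ge (1 - q) eps y ltac:(lra) Hy) as Hbase.
  pose proof (dist_image_le (1 - q) eps y ltac:(lra) Hy x) as Hup.
  pose proof (dist_image_ge Hd HT x y) as Hlow.
  replace (1 - (1 - q)) with q in * by ring.
  pose proof (dist_nonneg Hd x0 (T x)). pose proof (dist_nonneg Hd x0 x).
  assert (Hxy : q * (d x0 y - d x0 x) <= q * d x y).
  { apply Rmult_le_compat_l; [lra|].
    pose proof (dist_triangle Hd x0 x y). lra. }
  assert (HdTy : (1 - q) * dT <= (1 - q) * d y (T y))
    by (apply Rmult_le_compat_l; [lra|apply HdT_le]).
  assert (Hqe : q * (dT + d x0 (T x) + d x0 x) <= eps * (dT + d x0 (T x) + d x0 x))
    by (apply Rmult_le_compat_r; lra).
  apply Rabs_le. fold M in Hdisp. nra.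
Qed.

End ConicalContraction.

Theorem theorem1 (X : Type) (d : X -> X -> R) (x0 : X)
  (Hd : is_metric d)
  (Hbic : exists sigma : X -> X -> R -> X, weak_conical_bicombing d sigma)
  (T : X -> X) (HT : forall x y, d (T x) (T y) = d x y)
  (dT : R) (HdT : is_inf_displacement d T dT) :
  exists h : X -> R,
    metric_functional d x0 h /\
    (forall x, h (T x) = h x - dT) /\
    (forall y, (forall z, h z = hfun d x0 y z) -> T y = y) /\
    ((forall y, exists x, T x = y) ->
      forall Tinv : X -> X, (forall x, T (Tinv x) = x) ->
        forall x, h (Tinv x) - h (Tinv x0) = h x).
Proof.
  destruct Hbic as [sigma Hsigma].
  assert (Hy : forall n : nat, exists y, forall x,
    Rabs (hfun d x0 y (T x) - hfun d x0 y x + dT)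
      <= / (INR n + 1) * (4 + dT + d x0 (T x) + d x0 x)).
  { intros n. pose proof (pos_INR n).
    apply (hfun_almost_translated x0 Hd Hsigma HT dT _ HdT). split.
    - apply Rinv_0_lt_compat. lra.
    - rewrite <- Rinv_1. apply Rinv_le_contravar; lra. }
  destruct (functional_choice _ Hy) as [y Hy'].
  destruct (PointwiseCompactness.bounded_seq_cluster_point (fun z => d z x0)
              (fun n => hfun d x0 (y n)) (fun n => Rabs_hfun_le Hd x0 (y n)))
    as [h Hh].
  pose proof (cluster_point_translation _ h T _ dT Hh Hy') as HhT.
  pose proof (metric_functional_cluster_point Hd x0 y h Hh) as Hmf.
  exists h. split; [|split; [|split]].
  - exact Hmf.
  - exact HhT.
  - intros z Hz. specialize (HhT z). rewrite !Hz in HhT. unfold hfun in HhT.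
    rewrite (dist_refl Hd) in HhT.
    pose proof (inf_displacement_nonneg Hd _ HdT). pose proof (dist_nonneg Hd (T z) z).
    apply (dist_eq0 Hd). lra.
  - intros _ Tinv HTinv x.
    pose proof (HhT (Tinv x)). pose proof (HhT (Tinv x0)).
    pose proof (metric_functional_base x0 h Hmf).
    rewrite !HTinv in *. lra.
Qed.
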